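(* Suppose $\mathbf v_1=(v_{11},v_{12})\neq0$, $\mathbf v_2=(v_{21},v_{22})\neq0$ and $d\neq0$. Then for every point $[u,y_1,y_2]\in Z(\mathbf v,d)$ not in $Z(\mathbf v,d)\cap G(\mathbf v,d)$, there is exactly one point of $HC_F(\mathbf v,d)$ mapped to $[u,y_1,y_2]$ by $\rho$.
   Context: On $\mathbb{C}P^4$ with coordinates $[u,y_1,y_2,r_1,r_2]$, let $L_1=v_{11}(u-y_1)-v_{12}y_2$, $L_2=-v_{21}(u+y_1)-v_{22}y_2$, $f_1=(u-y_1)^2+y_2^2$, $f_2=(u+y_1)^2+y_2^2$, and $HC_F(\mathbf v,d)=\{f_1=r_1^2,\ f_2=r_2^2,\ L_2r_1-L_1r_2-dr_1r_2=0\}$. Let $Z(\mathbf v,d)\subset\mathbb{C}P^2$ (coordinates $[u,y_1,y_2]$) be the zero set of $h=(L_2^2f_1+L_1^2f_2-d^2f_1f_2)^2-4L_1^2L_2^2f_1f_2$, let $G(\mathbf v,d)=\{[u,y_1,y_2]\in\mathbb{C}P^2: L_1L_2=0\}$, and let $\rho:HC_F(\mathbf v,d)\to Z(\mathbf v,d)$ be $\rho([u,y_1,y_2,r_1,r_2])=[u,y_1,y_2]$. Parameters are complex. *)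

From HB Require Import structures.
From mathcomp Require Import all_boot all_order all_algebra.
From mathcomp Require Import reals complex.
Set Implicit Arguments. Unset Strict Implicit. Unset Printing Implicit Defensive.
Import Order.TTheory GRing.Theory Num.Theory.
Local Open Scope ring_scope.

Section Defs.
Variable C : fieldType.

(* Homogeneous coordinates: a point of CP^(n-1) is represented by a nonzero
   row vector of 'rV[C]_n; two vectors represent the same point iff
   they are proportional by a nonzero scalar. *)
Definition pequiv n (a b : 'rV[C]_n) : Prop := exists2 k : C, k != 0 & b = k *: a.

Definition coord n (x : 'rV[C]_n.+1) (k : nat) : C := x ord0 (inord k).

(* On CP^2 with coordinates [u, y1, y2] = [x_0, x_1, x_2]. *)
Definition Lone (v11 v12 : C) (x : 'rV[C]_3) : C :=
  v11 * (coord x 0 - coord x 1) - v12 * coord x 2.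
Definition Ltwo (v21 v22 : C) (x : 'rV[C]_3) : C :=
  - v21 * (coord x 0 + coord x 1) - v22 * coord x 2.
Definition fone (x : 'rV[C]_3) : C := (coord x 0 - coord x 1) ^+ 2 + coord x 2 ^+ 2.
Definition ftwo (x : 'rV[C]_3) : C := (coord x 0 + coord x 1) ^+ 2 + coord x 2 ^+ 2.

Definition hpoly (v11 v12 v21 v22 d : C) (x : 'rV[C]_3) : C :=
  let L1 := Lone v11 v12 x in let L2 := Ltwo v21 v22 x in
  let f1 := fone x in let f2 := ftwo x in
  (L2 ^+ 2 * f1 + L1 ^+ 2 * f2 - d ^+ 2 * f1 * f2) ^+ 2
  - 4%:R * L1 ^+ 2 * L2 ^+ 2 * f1 * f2.

Definition inZ (v11 v12 v21 v22 d : C) (x : 'rV[C]_3) : Prop :=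
  x != 0 /\ hpoly v11 v12 v21 v22 d x = 0.
Definition inG (v11 v12 v21 v22 : C) (x : 'rV[C]_3) : Prop :=
  x != 0 /\ Lone v11 v12 x * Ltwo v21 v22 x = 0.

Definition rho (p : 'rV[C]_5) : 'rV[C]_3 :=
  \row_(i < 3) p ord0 (widen_ord (isT : (3 <= 5)%N) i).

(* HC_F(v,d) in CP^4, coordinates [u,y1,y2,r1,r2] = [p_0,...,p_4] *)
Definition inHC (v11 v12 v21 v22 d : C) (p : 'rV[C]_5) : Prop :=
  let x := rho p in let r1 := coord p 3 in let r2 := coord p 4 in
  [/\ p != 0, fone x = r1 ^+ 2, ftwo x = r2 ^+ 2 &
      Ltwo v21 v22 x * r1 - Lone v11 v12 x * r2 - d * r1 * r2 = 0].

End Defs.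

From Pilot Require Import Defs.
From HB Require Import structures.
From mathcomp Require Import all_boot all_order all_algebra.
From mathcomp Require Import reals complex.
From mathcomp Require Import ring.
Set Implicit Arguments. Unset Strict Implicit. Unset Printing Implicit Defensive.
Import Order.TTheory GRing.Theory Num.Theory.
Local Open Scope ring_scope.

(** Up to scaling, the points of [HC_F] over a point [x] of the plane are
   [[x, r1, r2]] with [r1^2 = f1 x], [r2^2 = f2 x] and [e(r1, r2) = 0], where
   [e(r1, r2) = L2 r1 - L1 r2 - d r1 r2].  The product of [e] over the four
   sign choices [(+-r1, +-r2)] of fixed square roots is [h x], so every point
   of [Z] has a preimage.  Adding [e] at two different sign choices gives
   [2 L2 r1], [-2 L1 r2] or [-2 d r1 r2]; when [L1 L2 d != 0] (that is, off
   [G]) two roots of [e] with the same squares therefore coincide, and the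
   preimage is unique. *)

Section SignedRoots.
Variable C : idomainType.

Definition hc_form (L1 L2 d r1 r2 : C) : C := L2 * r1 - L1 * r2 - d * r1 * r2.

Definition hc_disc (L1 L2 d f1 f2 : C) : C :=
  (L2 ^+ 2 * f1 + L1 ^+ 2 * f2 - d ^+ 2 * f1 * f2) ^+ 2
  - 4%:R * L1 ^+ 2 * L2 ^+ 2 * f1 * f2.

Lemma hc_form_sign_prod (L1 L2 d r1 r2 : C) :
  hc_form L1 L2 d r1 r2 * hc_form L1 L2 d (- r1) (- r2)
  * (hc_form L1 L2 d r1 (- r2) * hc_form L1 L2 d (- r1) r2)
  = hc_disc L1 L2 d (r1 ^+ 2) (r2 ^+ 2).
Proof. rewrite /hc_form /hc_disc; ring. Qed.

Lemma hc_disc_eq0_root (L1 L2 d r1 r2 : C) :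
  hc_disc L1 L2 d (r1 ^+ 2) (r2 ^+ 2) = 0 ->
  exists s1 s2 : C,
    [/\ s1 ^+ 2 = r1 ^+ 2, s2 ^+ 2 = r2 ^+ 2 & hc_form L1 L2 d s1 s2 = 0].
Proof.
rewrite -hc_form_sign_prod => /eqP.
rewrite !mulf_eq0 => /orP[/orP[]|/orP[]] /eqP root.
- by exists r1, r2.
- by exists (- r1), (- r2); rewrite !sqrrN.
- by exists r1, (- r2); rewrite !sqrrN.
- by exists (- r1), r2; rewrite !sqrrN.
Qed.

Lemma hc_form_root_axis (L1 L2 d s1 s2 : C) :
  L1 != 0 -> L2 != 0 -> hc_form L1 L2 d s1 s2 = 0 -> s1 * s2 = 0 ->
  s1 = 0 /\ s2 = 0.
Proof.
rewrite /hc_form => L1_neq0 L2_neq0 root /eqP; rewrite mulf_eq0.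
case/orP => /eqP s0; move: root; rewrite s0 !(mulr0, mul0r, subr0, sub0r).
- by move/eqP; rewrite oppr_eq0 mulf_eq0 (negbTE L1_neq0) => /eqP.
- by move/eqP; rewrite mulf_eq0 (negbTE L2_neq0) => /eqP.
Qed.

Lemma hc_form_root_unique (L1 L2 d s1 s2 t1 t2 : C) :
  (2%:R : C) != 0 -> L1 != 0 -> L2 != 0 -> d != 0 ->
  t1 ^+ 2 = s1 ^+ 2 -> t2 ^+ 2 = s2 ^+ 2 ->
  hc_form L1 L2 d s1 s2 = 0 -> hc_form L1 L2 d t1 t2 = 0 ->
  t1 = s1 /\ t2 = s2.
Proof.
move=> two_neq0 L1_neq0 L2_neq0 d_neq0 /eqP t1s1 /eqP t2s2 root_s.
have prod_eq0 c : c != 0 -> c * (s1 * s2) = 0 -> s1 = 0 /\ s2 = 0.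
  move=> c_neq0 /eqP; rewrite mulf_eq0 (negbTE c_neq0) => /eqP.
  exact: hc_form_root_axis L1_neq0 L2_neq0 root_s.
move: t1s1 t2s2; rewrite !eqf_sqr.
case/orP=> /eqP -> /orP[] /eqP -> root_t //.
all: suff [-> ->] : s1 = 0 /\ s2 = 0 by rewrite oppr0.
- apply: (prod_eq0 (2%:R * L2)); first by rewrite mulf_neq0.
  transitivity (s2 * (hc_form L1 L2 d s1 s2 + hc_form L1 L2 d s1 (- s2))).
    by rewrite /hc_form; ring.
  by rewrite root_s root_t addr0 mulr0.
- apply: (prod_eq0 (2%:R * L1)); first by rewrite mulf_neq0.
  transitivity (- s1 * (hc_form L1 L2 d s1 s2 + hc_form L1 L2 d (- s1) s2)).
    by rewrite /hc_form; ring.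
  by rewrite root_s root_t addr0 mulr0.
- apply: (prod_eq0 (2%:R * d)); first by rewrite mulf_neq0.
  transitivity (- (hc_form L1 L2 d s1 s2 + hc_form L1 L2 d (- s1) (- s2))).
    by rewrite /hc_form; ring.
  by rewrite root_s root_t addr0 oppr0.
Qed.

End SignedRoots.

Section Fibre.
Variable C : fieldType.
Implicit Types (x : 'rV[C]_3) (p : 'rV[C]_5) (a r : C).

Definition hc_lift x r1 r2 : 'rV[C]_5 :=
  \row_(i < 5) [:: Defs.coord x 0; Defs.coord x 1; Defs.coord x 2; r1; r2]`_i.

Lemma coord_eqP n (y z : 'rV[C]_n.+1) :
  (forall k, (k < n.+1)%N -> Defs.coord y k = Defs.coord z k) -> y = z.
Proof.
move=> eq_yz; apply/rowP => j.
by have := eq_yz j (ltn_ord j); rewrite /Defs.coord inord_val.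
Qed.

Lemma coordZ n a (y : 'rV[C]_n.+1) k :
  Defs.coord (a *: y) k = a * Defs.coord y k.
Proof. by rewrite /Defs.coord mxE. Qed.

Lemma coord_rho p k : (k < 3)%N -> Defs.coord (rho p) k = Defs.coord p k.
Proof.
move=> lt_k3; rewrite /Defs.coord /rho mxE; congr (p ord0 _); apply: val_inj.
by rewrite /= !inordK //; apply: ltn_trans lt_k3 _.
Qed.

Lemma coord_hc_lift x r1 r2 k : (k < 5)%N ->
  Defs.coord (hc_lift x r1 r2) k
  = [:: Defs.coord x 0; Defs.coord x 1; Defs.coord x 2; r1; r2]`_k.
Proof. by move=> lt_k5; rewrite /Defs.coord mxE inordK. Qed.

Lemma rho_hc_lift x r1 r2 : rho (hc_lift x r1 r2) = x.
Proof.
apply: coord_eqP => k lt_k3; rewrite coord_rho // coord_hc_lift.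
  by case: k lt_k3 => [|[|[|]]].
exact: ltn_trans lt_k3 _.
Qed.

Lemma hc_liftK p : hc_lift (rho p) (Defs.coord p 3) (Defs.coord p 4) = p.
Proof.
apply: coord_eqP => k lt_k5; rewrite coord_hc_lift //.
by case: k lt_k5 => [|[|[|[|[|]]]]] //= _; rewrite coord_rho.
Qed.

Lemma hc_liftZ a x r1 r2 :
  hc_lift (a *: x) (a * r1) (a * r2) = a *: hc_lift x r1 r2.
Proof.
apply: coord_eqP => k lt_k5; rewrite coordZ !coord_hc_lift //.
by case: k lt_k5 => [|[|[|[|[|]]]]] //= _; rewrite coordZ.
Qed.

Lemma LoneZ v11 v12 a x : Lone v11 v12 (a *: x) = a * Lone v11 v12 x.
Proof. rewrite /Lone !coordZ; ring. Qed.

Lemma LtwoZ v21 v22 a x : Ltwo v21 v22 (a *: x) = a * Ltwo v21 v22 x.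
Proof. rewrite /Ltwo !coordZ; ring. Qed.

Lemma foneZ a x : fone (a *: x) = a ^+ 2 * fone x.
Proof. rewrite /fone !coordZ; ring. Qed.

Lemma ftwoZ a x : ftwo (a *: x) = a ^+ 2 * ftwo x.
Proof. rewrite /ftwo !coordZ; ring. Qed.

Variables v11 v12 v21 v22 d : C.

Definition on_fibre x r1 r2 : Prop :=
  [/\ fone x = r1 ^+ 2, ftwo x = r2 ^+ 2 &
      hc_form (Lone v11 v12 x) (Ltwo v21 v22 x) d r1 r2 = 0].

Lemma on_fibreZ a x r1 r2 :
  a != 0 -> on_fibre (a *: x) (a * r1) (a * r2) -> on_fibre x r1 r2.
Proof.
move=> a_neq0; have a2_neq0 : a ^+ 2 != 0 by rewrite expf_neq0.
rewrite /on_fibre /hc_form foneZ ftwoZ LoneZ LtwoZ => -[f1E f2E formE].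
split; apply: (mulfI a2_neq0); rewrite ?f1E ?f2E ?mulr0 -?formE; ring.
Qed.

Lemma inHC_hc_lift x r1 r2 :
  x != 0 -> on_fibre x r1 r2 -> inHC v11 v12 v21 v22 d (hc_lift x r1 r2).
Proof.
move=> x_neq0 [f1E f2E formE]; rewrite /inHC rho_hc_lift !coord_hc_lift //.
split=> //; apply: contra_neq x_neq0 => lift0.
by rewrite -(rho_hc_lift x r1 r2) lift0; apply/rowP => i; rewrite !mxE.
Qed.

Lemma inHC_fibre p a x :
  a != 0 -> inHC v11 v12 v21 v22 d p -> rho p = a *: x ->
  exists r1 r2, p = a *: hc_lift x r1 r2 /\ on_fibre x r1 r2.
Proof.
move=> a_neq0 [_ f1E f2E formE] rhoE.
have coord_div k : Defs.coord p k = a * (Defs.coord p k / a).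
  by rewrite mulrC divfK.
exists (Defs.coord p 3 / a), (Defs.coord p 4 / a); split.
  by rewrite -hc_liftZ -!coord_div -rhoE hc_liftK.
by apply: (on_fibreZ a_neq0); rewrite -!coord_div -rhoE.
Qed.

Lemma notin_G_L_neq0 x :
  x != 0 -> ~ inG v11 v12 v21 v22 x ->
  Lone v11 v12 x != 0 /\ Ltwo v21 v22 x != 0.
Proof.
move=> x_neq0 notG; split; apply/eqP => L0; apply: notG.
  by rewrite /inG L0 mul0r.
by rewrite /inG L0 mulr0.
Qed.

Lemma pequiv_scale n (y z : 'rV[C]_n) :
  pequiv y z -> exists2 a, a != 0 & y = a *: z.
Proof.
case=> k k_neq0 ->; exists k^-1; first by rewrite invr_eq0.
by rewrite scalerA mulVf ?scale1r.
Qed.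

Lemma inHC_pequiv x p q :
  (2%:R : C) != 0 -> d != 0 -> x != 0 -> ~ inG v11 v12 v21 v22 x ->
  inHC v11 v12 v21 v22 d p -> pequiv (rho p) x ->
  inHC v11 v12 v21 v22 d q -> pequiv (rho q) x -> pequiv p q.
Proof.
move=> two_neq0 d_neq0 x_neq0 notG HCp /pequiv_scale[a a_neq0 rhop].
move=> HCq /pequiv_scale[b b_neq0 rhoq].
have [L1_neq0 L2_neq0] := notin_G_L_neq0 x_neq0 notG.
have [r1 [r2 [-> [f1r f2r form_r]]]] := inHC_fibre a_neq0 HCp rhop.
have [t1 [t2 [-> [f1t f2t form_t]]]] := inHC_fibre b_neq0 HCq rhoq.
have [-> ->] := hc_form_root_unique two_neq0 L1_neq0 L2_neq0 d_neq0
  (etrans (esym f1t) f1r) (etrans (esym f2t) f2r) form_r form_t.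
exists (b / a); first by rewrite mulf_neq0 ?invr_eq0.
by rewrite scalerA divfK.
Qed.

End Fibre.

Lemma inZ_fibre_nonempty (C : numClosedFieldType) (v11 v12 v21 v22 d : C) x :
  inZ v11 v12 v21 v22 d x ->
  exists p, inHC v11 v12 v21 v22 d p /\ pequiv (rho p) x.
Proof.
case=> x_neq0; rewrite /hpoly -(sqrtCK (fone x)) -(sqrtCK (ftwo x)).
case/hc_disc_eq0_root => [r1 [r2 [f1r f2r form_r]]].
exists (hc_lift x r1 r2); rewrite rho_hc_lift; split.
  by apply: inHC_hc_lift => //; split; rewrite ?f1r ?f2r ?sqrtCK.
by exists 1; rewrite ?oner_neq0 ?scale1r.
Qed.

Theorem lemma8p5 (R : realType) (v11 v12 v21 v22 d : R[i]) (x : 'rV[R[i]]_3) :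
  (v11, v12) != (0, 0) -> (v21, v22) != (0, 0) -> d != 0 ->
  inZ v11 v12 v21 v22 d x -> ~ inG v11 v12 v21 v22 x ->
  (exists p : 'rV[R[i]]_5, inHC v11 v12 v21 v22 d p /\ pequiv (rho p) x) /\
  (forall p q : 'rV[R[i]]_5,
      inHC v11 v12 v21 v22 d p -> pequiv (rho p) x ->
      inHC v11 v12 v21 v22 d q -> pequiv (rho q) x ->
      pequiv p q).
Proof.
move=> _ _ d_neq0 Zx notG; split; first exact: inZ_fibre_nonempty.
have two_neq0 : (2%:R : R[i]) != 0 by rewrite pnatr_eq0.
move=> p q; apply: (inHC_pequiv two_neq0 d_neq0 _ notG).
by case: Zx.
Qed.
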